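(* Let $(X,\rho,\mu)$ be a space of homogeneous type with infinitely many points. Then precisely one of the following holds: (1) $\mu(X)<\infty$; (2) $X$ is countably infinite and there is $\delta>0$ with $\mu(\{x\})\ge\delta$ for all $x\in X$; (3) the measures $\mu(B)$ of balls $B\subseteq X$ take arbitrarily small and arbitrarily large values (i.e. $\inf_B\mu(B)=0$ and $\sup_B\mu(B)=\infty$).
   Context: A space of homogeneous type $(X,\rho,\mu)$: $\rho$ is a quasi-metric on $X$, i.e. it satisfies the axioms of a metric except that the triangle inequality is replaced by $\rho(x,y)\le A_0(\rho(x,z)+\rho(z,y))$ for some constant $A_0\ge 1$; balls are $B(x,r)=\{y\in X:\rho(x,y)<r\}$; $\mu$ is a positive Borel measure defined on a $\sigma$-algebra containing the balls, with the doubling property: there is $C\ge1$ such that $0<\mu(B(x,2r))\le C\mu(B(x,r))<\infty$ for all $x\in X$, $r>0$. *)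

From Stdlib Require Import Reals List.
Open Scope R_scope.

(* Extended nonnegative reals: finite values or +infinity. *)
Inductive ereal : Type := Fin (r : R) | PInf.

Definition ele (a b : ereal) : Prop :=
  match a, b with
  | Fin x, Fin y => x <= y
  | _, PInf => True
  | PInf, Fin _ => False
  end.

Definition eadd (a b : ereal) : ereal :=
  match a, b with
  | Fin x, Fin y => Fin (x + y)
  | _, _ => PInf
  end.

Fixpoint epsum (f : nat -> ereal) (n : nat) : ereal :=
  match n with
  | O => f O
  | S m => eadd (epsum f m) (f (S m))
  end.

Definition is_esum (f : nat -> ereal) (s : ereal) : Prop :=
  (forall n, ele (epsum f n) s) /\
  (forall t, (forall n, ele (epsum f n) t) -> ele s t).

Definition ball {X : Type} (rho : X -> X -> R) (x : X) (r : R) : X -> Prop :=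
  fun y => rho x y < r.

Definition quasi_metric {X : Type} (rho : X -> X -> R) (A0 : R) : Prop :=
  1 <= A0 /\
  (forall x y, 0 <= rho x y) /\
  (forall x y, rho x y = 0 <-> x = y) /\
  (forall x y, rho x y = rho y x) /\
  (forall x y z, rho x y <= A0 * (rho x z + rho z y)).

Definition sigma_algebra {X : Type} (M : (X -> Prop) -> Prop) : Prop :=
  M (fun _ => True) /\
  (forall A, M A -> M (fun x => ~ A x)) /\
  (forall A : nat -> X -> Prop, (forall n, M (A n)) -> M (fun x => exists n, A n x)).

Definition is_measure {X : Type} (M : (X -> Prop) -> Prop) (mu : (X -> Prop) -> ereal) : Prop :=
  mu (fun _ => False) = Fin 0 /\
  (forall A, M A -> ele (Fin 0) (mu A)) /\
  (forall A : nat -> X -> Prop,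
     (forall n, M (A n)) ->
     (forall i j x, i <> j -> A i x -> A j x -> False) ->
     is_esum (fun n => mu (A n)) (mu (fun x => exists n, A n x))).

Definition homogeneous_type {X : Type} (rho : X -> X -> R)
  (M : (X -> Prop) -> Prop) (mu : (X -> Prop) -> ereal) : Prop :=
  (exists A0, quasi_metric rho A0) /\
  sigma_algebra M /\
  (forall x r, M (ball rho x r)) /\
  is_measure M mu /\
  (exists C, 1 <= C /\
     forall x r, 0 < r ->
       exists a b, mu (ball rho x (2 * r)) = Fin a /\ mu (ball rho x r) = Fin b /\
                   0 < a /\ a <= C * b).

Definition infinite_type (X : Type) : Prop :=
  forall l : list X, exists x, ~ In x l.

Definition countably_infinite (X : Type) : Prop :=
  exists f : nat -> X, (forall m n, f m = f n -> m = n) /\ (forall x, exists n, f n = x).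

Definition exactly_one (P Q S : Prop) : Prop :=
  (P \/ Q \/ S) /\ ~ (P /\ Q) /\ ~ (P /\ S) /\ ~ (Q /\ S).

(* Exclusivity is elementary: a ball lies inside X (1 vs 3), a point lies in
   every ball centred at it (2 vs 3), and infinitely many points of mass
   >= delta force mu(X) = oo (1 vs 2).  For existence, assume mu(X) = oo.
   Continuity from below along the balls B(x0, n+1), which exhaust X, makes
   ball measures unbounded.  If they are not also arbitrarily small they are
   bounded below by some eps > 0, and continuity from above along
   B(x, 1/(k+1)), which shrink to {x}, bounds every point mass below by eps.
   Then each (finite-measure) ball holds finitely many points, and enumerating
   X by increasing distance from x0 shows X is countably infinite. *)

From Stdlib Require Import Reals List Lra Lia Classical ClassicalEpsilon.
From Stdlib Require Import FunctionalExtensionality PropExtensionality FinFun Wf_nat.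
Open Scope R_scope.

Lemma pred_ext {X : Type} (A B : X -> Prop) : (forall x, A x <-> B x) -> A = B.
Proof.
  intros h; apply functional_extensionality; intro x.
  apply propositional_extensionality; auto.
Qed.

Lemma mu_ext {X : Type} (mu : (X -> Prop) -> ereal) (A B : X -> Prop) :
  (forall x, A x <-> B x) -> mu A = mu B.
Proof. intros h; rewrite (pred_ext A B h); reflexivity. Qed.

Definition scons {T : Type} (a : T) (f : nat -> T) (i : nat) : T :=
  match i with O => a | S j => f j end.

Definition pairwise_disjoint {X : Type} (A : nat -> X -> Prop) : Prop :=
  forall i j x, i <> j -> A i x -> A j x -> False.

Lemma chain_up (P : nat -> Prop) :
  (forall k, P k -> P (S k)) -> forall j k, (j <= k)%nat -> P j -> P k.
Proof. intros h j k hjk; induction hjk; auto. Qed.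

Lemma chain_down (P : nat -> Prop) :
  (forall k, P (S k) -> P k) -> forall j k, (j <= k)%nat -> P k -> P j.
Proof. intros h j k hjk; induction hjk; auto. Qed.

Section SigmaAlgebra.
Context {X : Type} (M : (X -> Prop) -> Prop).
Hypothesis hs : sigma_algebra M.

Lemma M_ext (A B : X -> Prop) : M A -> (forall x, A x <-> B x) -> M B.
Proof. intros hA h; rewrite <- (pred_ext A B h); exact hA. Qed.

Lemma M_compl (A : X -> Prop) : M A -> M (fun x => ~ A x).
Proof. apply hs. Qed.

Lemma M_cup (A : nat -> X -> Prop) : (forall n, M (A n)) -> M (fun x => exists n, A n x).
Proof. apply hs. Qed.

Lemma M_cap (A : nat -> X -> Prop) : (forall n, M (A n)) -> M (fun x => forall n, A n x).
Proof.
  intros hA. apply M_ext with (fun x => ~ exists n, ~ A n x).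
  - apply M_compl, M_cup; intro n; apply M_compl, hA.
  - intro x; split.
    + intros h n; apply NNPP; intro hn; eauto.
    + intros h [n hn]; auto.
Qed.

Lemma M_empty : M (fun _ => False).
Proof. apply M_ext with (fun x : X => ~ True); [apply M_compl, hs | tauto]. Qed.

Lemma M_diff (A B : X -> Prop) : M A -> M B -> M (fun x => A x /\ ~ B x).
Proof.
  intros hA hB. apply M_ext with (fun x => forall n, scons A (fun _ y => ~ B y) n x).
  - apply M_cap; intros [|n]; [exact hA | apply M_compl, hB].
  - intro x; split; [intro h; exact (conj (h O) (h 1%nat)) | intros [a b] [|n]; auto].
Qed.

End SigmaAlgebra.

Lemma ele_trans (a b c : ereal) : ele a b -> ele b c -> ele a c.
Proof. destruct a, b, c; simpl; intuition lra. Qed.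

Lemma eadd_assoc (a b c : ereal) : eadd a (eadd b c) = eadd (eadd a b) c.
Proof. destruct a, b, c; simpl; auto; f_equal; ring. Qed.

Lemma ele_eadd_r (a c : ereal) : ele (Fin 0) c -> ele a (eadd c a).
Proof. destruct a, c; simpl; auto; lra. Qed.

Lemma epsum_ext (f g : nat -> ereal) (n : nat) :
  (forall i, (i <= n)%nat -> f i = g i) -> epsum f n = epsum g n.
Proof.
  induction n; simpl; intros h.
  - apply h; lia.
  - rewrite IHn, h; auto; intros; apply h; lia.
Qed.

Lemma epsum_scons (a : ereal) (f : nat -> ereal) (n : nat) :
  epsum (scons a f) (S n) = eadd a (epsum f n).
Proof.
  induction n; [reflexivity|].
  change (eadd (epsum (scons a f) (S n)) (f (S n)) = eadd a (eadd (epsum f n) (f (S n)))).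
  rewrite IHn, eadd_assoc; reflexivity.
Qed.

Lemma epsum_lb (f : nat -> ereal) (n : nat) (c : R) :
  (forall i, (i <= n)%nat -> ele (Fin c) (f i)) -> ele (Fin (INR (S n) * c)) (epsum f n).
Proof.
  induction n; intros h.
  - simpl. replace (1 * c) with c by ring. apply h; lia.
  - simpl epsum. assert (h1 := IHn (fun i hi => h i ltac:(lia))).
    assert (h2 := h (S n) ltac:(lia)).
    destruct (epsum f n), (f (S n)); cbn [ele eadd] in *; auto.
    rewrite (S_INR (S n)). lra.
Qed.

Lemma nat_mul_unbounded (b eps : R) : 0 < eps -> exists k, b < INR k * eps.
Proof.
  intros he. destruct (INR_unbounded (b / eps)) as [k hk]. exists k.
  apply (Rmult_lt_compat_r eps) in hk; auto.
  unfold Rdiv in hk. rewrite Rmult_assoc, Rinv_l in hk; lra.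
Qed.

Section Measure.
Context {X : Type} (M : (X -> Prop) -> Prop) (mu : (X -> Prop) -> ereal).
Hypotheses (hs : sigma_algebra M) (hm : is_measure M mu).

Lemma measure_nonneg (A : X -> Prop) : M A -> ele (Fin 0) (mu A).
Proof. apply hm. Qed.

Lemma measure_additive (A : nat -> X -> Prop) :
  (forall n, M (A n)) -> pairwise_disjoint A ->
  is_esum (fun n => mu (A n)) (mu (fun x => exists n, A n x)).
Proof. apply hm. Qed.

(* A disjoint family inside U has all its partial sums of measures below mu(U):
   complete the family by U minus its union and use countable additivity. *)
Lemma partial_sums_le (A : nat -> X -> Prop) (U : X -> Prop) :
  M U -> (forall i, M (A i)) -> pairwise_disjoint A -> (forall i x, A i x -> U x) ->
  forall n, ele (epsum (fun i => mu (A i)) n) (mu U).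
Proof.
  intros hU hA hdis hsub n.
  set (Rest := fun x => U x /\ ~ exists i, A i x).
  assert (hRest : M Rest) by (apply M_diff, M_cup; auto).
  assert (hF : forall i, M (scons Rest A i)) by (intros [|i]; [exact hRest | apply hA]).
  assert (hFdis : pairwise_disjoint (scons Rest A)).
  { intros [|i] [|j] x hij; simpl; try congruence.
    - intros [_ hr] hj; eauto.
    - intros hi [_ hr]; eauto.
    - intros hi hj; apply (hdis i j x); auto. }
  assert (hcover : mu (fun x => exists i, scons Rest A i x) = mu U).
  { apply mu_ext; intro x; split.
    - intros [[|i] h]; [apply h | exact (hsub i x h)].
    - intro hx. destruct (classic (exists i, A i x)) as [[i hi] | hno].
      + exists (S i); exact hi.
      + exists O; split; auto. }
  assert (hsum := proj1 (measure_additive _ hF hFdis) (S n)).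
  rewrite hcover in hsum.
  rewrite (epsum_ext _ (scons (mu Rest) (fun i => mu (A i)))), epsum_scons in hsum
    by (intros [|i] _; reflexivity).
  apply (ele_trans _ _ _ (ele_eadd_r _ _ (measure_nonneg Rest hRest)) hsum).
Qed.

(* The same for a finite disjoint family A_0, ..., A_n, padded with empty sets. *)
Lemma finite_sum_le (A : nat -> X -> Prop) (U : X -> Prop) (n : nat) :
  M U -> (forall i, (i <= n)%nat -> M (A i)) ->
  (forall i j x, (i <= n)%nat -> (j <= n)%nat -> i <> j -> A i x -> A j x -> False) ->
  (forall i x, (i <= n)%nat -> A i x -> U x) ->
  ele (epsum (fun i => mu (A i)) n) (mu U).
Proof.
  intros hU hA hdis hsub.
  set (At := fun i x => (i <= n)%nat /\ A i x).
  rewrite (epsum_ext _ (fun i => mu (At i))).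
  - apply partial_sums_le; auto.
    + intro i. destruct (Compare_dec.le_lt_dec i n) as [h | h].
      * apply M_ext with (A i); [apply hA; auto | unfold At; tauto].
      * apply M_ext with (fun _ => False); [apply M_empty; auto|].
        unfold At; split; [tauto | lia].
    + intros i j x hij [hi ai] [hj aj]; eauto.
    + intros i x [hi ai]; eauto.
  - intros i hi; apply mu_ext; unfold At; tauto.
Qed.

Lemma measure_mono (A U : X -> Prop) : M A -> M U -> (forall x, A x -> U x) -> ele (mu A) (mu U).
Proof.
  intros hA hU hsub.
  apply (finite_sum_le (fun _ => A) U 0); auto; intros; lia.
Qed.

(* The union is the disjoint union of the layers
   B_0, B_1 \ B_0, B_2 \ B_1, ..., whose first k + 1 terms lie in B_k. *)
Lemma measure_increasing_le (B : nat -> X -> Prop) (t : ereal) :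
  (forall k, M (B k)) -> (forall k x, B k x -> B (S k) x) ->
  (forall k, ele (mu (B k)) t) -> ele (mu (fun x => exists k, B k x)) t.
Proof.
  intros hB hinc ht.
  set (D := scons (B O) (fun j x => B (S j) x /\ ~ B j x)).
  assert (hmono : forall x j k, (j <= k)%nat -> B j x -> B k x)
    by (intros x; apply (chain_up (fun k => B k x)); auto).
  assert (hDB : forall i x, D i x -> B i x) by (intros [|i] x h; [exact h | apply h]).
  assert (hDM : forall i, M (D i))
    by (intros [|i]; [apply hB | unfold D; simpl; apply M_diff; auto]).
  assert (hDdis : forall i j x, (i < j)%nat -> D i x -> D j x -> False).
  { intros i [|j] x hij hi hj; [lia|]. apply (proj2 hj), (hmono x i j); [lia | auto]. }
  assert (hcover : forall x k, B k x -> exists i, D i x).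
  { intros x k; induction k as [|k IH]; intro hk; [exists O; exact hk|].
    destruct (classic (B k x)) as [h | h]; [auto | exists (S k); split; auto]. }
  replace (mu (fun x => exists k, B k x)) with (mu (fun x => exists i, D i x))
    by (apply mu_ext; intro x; split; [intros [i hi]; eauto | intros [k hk]; eauto]).
  assert (hpair : pairwise_disjoint D)
    by (intros i j x hij; destruct (proj1 (Nat.lt_gt_cases i j) hij); eauto).
  apply (proj2 (measure_additive D hDM hpair)); intro n.
  apply ele_trans with (mu (B n)); [|apply ht].
  apply finite_sum_le; auto.
  - intros i j x _ _; apply hpair.
  - intros i x hi h; apply (hmono x i n hi), hDB, h.
Qed.

(* B_0 is the
   disjoint union of the intersection and the layers D_j = B_j \ B_{j+1};
   since B_{n+1}, D_0, ..., D_n are disjoint in B_0, the layers sum to at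
   most T - eps, hence T <= mu(intersection) + T - eps. *)
Lemma measure_decreasing_ge (B : nat -> X -> Prop) (T eps : R) :
  (forall k, M (B k)) -> (forall k x, B (S k) x -> B k x) ->
  mu (B O) = Fin T -> (forall k, ele (Fin eps) (mu (B k))) ->
  ele (Fin eps) (mu (fun x => forall k, B k x)).
Proof.
  intros hB hdec hT heps.
  set (Cap := fun x => forall k, B k x).
  set (D := fun j x => B j x /\ ~ B (S j) x).
  assert (hmono : forall x j k, (j <= k)%nat -> B k x -> B j x)
    by (intros x; apply (chain_down (fun k => B k x)); auto).
  assert (hDM : forall j, M (D j)) by (intro j; apply M_diff; auto).
  assert (hDdis : forall i j x, (i < j)%nat -> D i x -> D j x -> False)
    by (intros i j x hij [_ hi] [hj _]; apply hi, (hmono x (S i) j); auto).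
  assert (hlayers : forall n, exists d, epsum (fun j => mu (D j)) n = Fin d /\ d <= T - eps).
  { intro n.
    assert (h : ele (epsum (fun i => mu (scons (B (S n)) D i)) (S n)) (mu (B O))).
    { apply finite_sum_le; auto.
      - intros [|i] _; [apply hB | apply hDM].
      - intros [|i] [|j] x hi hj hij; simpl; [congruence | | |].
        + intros hn [_ hd]; apply hd, (hmono x (S j) (S n)); [lia | exact hn].
        + intros [_ hd] hn; apply hd, (hmono x (S i) (S n)); [lia | exact hn].
        + intros h1 h2; destruct (Compare_dec.lt_eq_lt_dec i j) as [[h | h] | h];
            [eauto | congruence | eauto].
      - intros [|i] x _ h; [apply (hmono x O (S n)) | apply (hmono x O i), h]; auto; lia. }
    rewrite hT, (epsum_ext _ (scons (mu (B (S n))) (fun j => mu (D j)))), epsum_scons in h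
      by (intros [|i] _; reflexivity).
    assert (he := heps (S n)).
    destruct (mu (B (S n))) as [e|], (epsum (fun j => mu (D j)) n) as [d|];
      simpl in h, he; try contradiction.
    exists d; split; [reflexivity | lra]. }
  assert (hCapM : M Cap) by (apply M_cap; auto).
  destruct (mu Cap) as [s|] eqn:es.
  2:{ assert (h := measure_mono Cap (B O) hCapM (hB O) (fun x hx => hx O)).
      rewrite es, hT in h; contradiction. }
  assert (hGM : forall i, M (scons Cap D i)) by (intros [|i]; [exact hCapM | apply hDM]).
  assert (hGdis : pairwise_disjoint (scons Cap D)).
  { intros [|i] [|j] x hij; simpl; [congruence | | |].
    - intros hc [_ hd]; apply hd, hc.
    - intros [_ hd] hc; apply hd, hc.
    - intros h1 h2; destruct (Compare_dec.lt_eq_lt_dec i j) as [[h | h] | h];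
        [eauto | congruence | eauto]. }
  assert (hexit : forall x k, B O x -> ~ B k x -> exists j, D j x).
  { intros x k h0; induction k as [|k IH]; intro hk; [contradiction|].
    destruct (classic (B k x)) as [h | h]; [exists k; split; auto | auto]. }
  assert (hcover : mu (fun x => exists i, scons Cap D i x) = Fin T).
  { rewrite <- hT; apply mu_ext; intro x; split.
    - intros [[|j] h]; [apply h | apply (hmono x O j); [lia | apply h]].
    - intro h0. destruct (classic (Cap x)) as [hc | hc]; [exists O; exact hc|].
      destruct (not_all_ex_not _ _ hc) as [k hk].
      destruct (hexit x k h0 hk) as [j hj]; exists (S j); exact hj. }
  assert (hT_eps : eps <= T) by (assert (h := heps O); rewrite hT in h; exact h).
  assert (h := proj2 (measure_additive _ hGM hGdis) (Fin (s + (T - eps)))).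
  rewrite hcover in h.
  enough (ele (Fin T) (Fin (s + (T - eps)))) by (simpl in *; lra).
  apply h; intros [|n].
  - simpl; rewrite es; simpl; lra.
  - rewrite (epsum_ext _ (scons (mu Cap) (fun j => mu (D j)))), epsum_scons, es
      by (intros [|i] _; reflexivity).
    destruct (hlayers n) as [d [hd hle]]; rewrite hd; simpl; lra.
Qed.

Lemma points_mass_le (U : X -> Prop) (b eps : R) (l : list X) :
  (forall x, M (fun y => y = x)) -> (forall x, ele (Fin eps) (mu (fun y => y = x))) ->
  M U -> mu U = Fin b -> NoDup l -> (forall z, In z l -> U z) ->
  INR (length l) * eps <= b.
Proof.
  intros hpM hpt hU hb hnd hin.
  destruct l as [|d l'].
  - assert (h := measure_nonneg U hU); rewrite hb in h; simpl in *; lra.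
  - set (pt := fun i y => y = nth i (d :: l') d).
    assert (hsum : ele (epsum (fun i => mu (pt i)) (length l')) (Fin b)).
    { rewrite <- hb; apply finite_sum_le; auto.
      - intros i _; apply hpM.
      - intros i j x hi hj hij -> e; apply hij.
        apply (proj1 (NoDup_nth (d :: l') d) hnd); simpl; auto; lia.
      - intros i x hi ->; apply hin, nth_In; simpl; lia. }
    exact (ele_trans _ _ _ (epsum_lb _ (length l') eps (fun i _ => hpt _)) hsum).
Qed.

End Measure.

Section Enumeration.
Context {X : Type} (next : list X -> X).

Fixpoint firsts (k : nat) : list X :=
  match k with O => nil | S k => next (firsts k) :: firsts k end.

Lemma In_firsts (k : nat) (z : X) :
  In z (firsts k) <-> exists j, (j < k)%nat /\ next (firsts j) = z.
Proof.
  induction k as [|k IH]; simpl; [split; [tauto | intros [j [h _]]; lia]|].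
  rewrite IH; split.
  - intros [e | [j [hj e]]]; [exists k | exists j]; split; auto.
  - intros [j [hj e]]. destruct (Nat.eq_dec j k) as [-> | ne]; auto.
    right; exists j; split; auto; lia.
Qed.

Lemma firsts_length (k : nat) : length (firsts k) = k.
Proof. induction k; simpl; auto. Qed.

Hypothesis next_fresh : forall l, ~ In (next l) l.

Lemma firsts_NoDup (k : nat) : NoDup (firsts k).
Proof. induction k; simpl; constructor; auto. Qed.

Lemma next_firsts_injective : forall m n, next (firsts m) = next (firsts n) -> m = n.
Proof.
  intros m n e. destruct (Compare_dec.lt_eq_lt_dec m n) as [[h | h] | h]; auto; exfalso.
  - apply (next_fresh (firsts n)); rewrite <- e; apply In_firsts; eauto.
  - apply (next_fresh (firsts m)); rewrite e; apply In_firsts; eauto.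
Qed.

End Enumeration.

(* An infinite type is countably infinite once it is graded by levels such that
   the points of level <= N are boundedly many, for each N: repeatedly pick a
   fresh point of least level; a point never picked would bound the levels of
   all picked points, yielding arbitrarily long lists of bounded level. *)
Lemma countably_infinite_of_bounded_levels (X : Type) (lvl : X -> nat) :
  infinite_type X ->
  (forall N, exists c, forall l : list X,
     NoDup l -> (forall z, In z l -> (lvl z <= N)%nat) -> (length l <= c)%nat) ->
  countably_infinite X.
Proof.
  intros hinf hbound.
  assert (hmin : forall l : list X, exists y, ~ In y l /\ forall z, ~ In z l -> (lvl y <= lvl z)%nat).
  { intro l.
    destruct (dec_inh_nat_subset_has_unique_least_element
                (fun n => exists y, ~ In y l /\ lvl y = n)) as [n [[[y [hy <-]] hleast] _]].
    - intro n; apply classic.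
    - destruct (hinf l) as [y hy]; eauto.
    - exists y; split; auto. intros z hz; apply hleast; eauto. }
  destruct (choice _ hmin) as [next hnext].
  assert (hfresh : forall l, ~ In (next l) l) by (intro l; apply hnext).
  exists (fun k => next (firsts next k)); split; [apply next_firsts_injective; auto|].
  intro x; apply NNPP; intro hmiss.
  assert (hlow : forall k z, In z (firsts next k) -> (lvl z <= lvl x)%nat).
  { intros k z hz. apply In_firsts in hz; destruct hz as [j [_ <-]].
    apply hnext; intro hx; apply In_firsts in hx; destruct hx as [i [_ e]]; eauto. }
  destruct (hbound (lvl x)) as [c hc].
  assert (h := hc (firsts next (S c)) (firsts_NoDup next hfresh _) (hlow _)).
  rewrite firsts_length in h; lia.
Qed.

Definition inv_succ (k : nat) : R := / (INR k + 1).

Lemma inv_succ_pos (k : nat) : 0 < inv_succ k.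
Proof. unfold inv_succ. apply Rinv_0_lt_compat. pose proof (pos_INR k); lra. Qed.

Lemma inv_succ_decr (k : nat) : inv_succ (S k) <= inv_succ k.
Proof.
  unfold inv_succ. apply Rinv_le_contravar; [pose proof (pos_INR k); lra|].
  rewrite S_INR; lra.
Qed.

Lemma inv_succ_small (a : R) : 0 < a -> exists k, inv_succ k < a.
Proof.
  intros ha. destruct (INR_unbounded (/ a)) as [k hk]. exists k. unfold inv_succ.
  rewrite <- (Rinv_inv a). apply Rinv_lt_contravar; [|lra].
  apply Rmult_lt_0_compat; [apply Rinv_0_lt_compat; auto | pose proof (pos_INR k); lra].
Qed.

Section HomogeneousType.
Context {X : Type} (rho : X -> X -> R) (M : (X -> Prop) -> Prop) (mu : (X -> Prop) -> ereal).
Hypothesis H : homogeneous_type rho M mu.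

Lemma ht_sigma : sigma_algebra M.
Proof. apply H. Qed.

Lemma ht_measure : is_measure M mu.
Proof. apply H. Qed.

Lemma ball_measurable (x : X) (r : R) : M (ball rho x r).
Proof. apply H. Qed.

Lemma rho_self (x : X) : rho x x = 0.
Proof. destruct H as [[A0 [_ [_ [hz _]]]] _]. apply hz; reflexivity. Qed.

Lemma rho_pos (x y : X) : y <> x -> 0 < rho x y.
Proof.
  destruct H as [[A0 [_ [hnn [hz _]]]] _]. intro hne.
  destruct (Rle_lt_or_eq_dec 0 (rho x y) (hnn x y)) as [h | h]; auto.
  exfalso; apply hne; symmetry; apply hz; auto.
Qed.

Lemma ball_center (x : X) (r : R) : 0 < r -> ball rho x r x.
Proof. unfold ball; rewrite rho_self; auto. Qed.

(* Balls of positive radius have finite measure (part of the doubling condition). *)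
Lemma ball_measure_finite (x : X) (r : R) : 0 < r -> exists b, mu (ball rho x r) = Fin b.
Proof.
  destruct H as [_ [_ [_ [_ [C [_ hdbl]]]]]]. intro hr.
  destruct (hdbl x r hr) as [a [b [_ [hb _]]]]; eauto.
Qed.

Lemma singleton_as_balls (x y : X) : (forall k, ball rho x (inv_succ k) y) <-> y = x.
Proof.
  split; [|intros -> k; apply ball_center, inv_succ_pos].
  intro h; apply NNPP; intro hne.
  destruct (inv_succ_small (rho x y) (rho_pos x y hne)) as [k hk].
  specialize (h k); unfold ball in h; lra.
Qed.

Lemma singleton_measurable (x : X) : M (fun y => y = x).
Proof.
  apply (M_ext M (fun y => forall k, ball rho x (inv_succ k) y)).
  - apply (M_cap M ht_sigma); intro k; apply ball_measurable.
  - intro y; apply singleton_as_balls.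
Qed.

Lemma point_le_ball (x : X) (r : R) : 0 < r -> ele (mu (fun y => y = x)) (mu (ball rho x r)).
Proof.
  intro hr. apply (measure_mono M mu ht_sigma ht_measure);
    [apply singleton_measurable | apply ball_measurable | intros y ->; apply ball_center; auto].
Qed.

Lemma ball_le_total (x : X) (r : R) : ele (mu (ball rho x r)) (mu (fun _ => True)).
Proof.
  apply (measure_mono M mu ht_sigma ht_measure); [apply ball_measurable | apply ht_sigma | auto].
Qed.

(* If mu(X) is infinite, so is the supremum of the measures of balls: the
   balls B(x0, n+1) increase to X. *)
Lemma balls_unbounded (x0 : X) :
  (forall m, mu (fun _ => True) <> Fin m) ->
  forall K, exists x r, 0 < r /\ ~ ele (mu (ball rho x r)) (Fin K).
Proof.
  intros hinf K. apply NNPP; intro hno.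
  assert (hall : forall k, ele (mu (ball rho x0 (INR k + 1))) (Fin K)).
  { intro k; apply NNPP; intro hk; apply hno.
    exists x0, (INR k + 1); split; auto; pose proof (pos_INR k); lra. }
  assert (hinc : forall k y, ball rho x0 (INR k + 1) y -> ball rho x0 (INR (S k) + 1) y)
    by (intros k y; unfold ball; rewrite S_INR; lra).
  assert (h := measure_increasing_le M mu ht_sigma ht_measure _ _
                 (fun k => ball_measurable x0 _) hinc hall).
  rewrite (mu_ext mu _ (fun _ => True)) in h.
  - destruct (mu (fun _ => True)) as [m|]; [exact (hinf m eq_refl) | exact h].
  - intro y; split; auto; intros _.
    destruct (INR_unbounded (rho x0 y)) as [n hn]; exists n; unfold ball; lra.
Qed.

Lemma ball_lb_of_not_small :
  ~ (forall eps, 0 < eps -> exists x r, 0 < r /\ exists m, mu (ball rho x r) = Fin m /\ m < eps) ->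
  exists eps, 0 < eps /\ forall x r, 0 < r -> ele (Fin eps) (mu (ball rho x r)).
Proof.
  intro hns. apply NNPP; intro hno; apply hns; intros eps he.
  apply NNPP; intro hbig; apply hno; exists eps; split; auto; intros x r hr.
  destruct (ball_measure_finite x r hr) as [m hm]; rewrite hm; simpl.
  apply Rnot_lt_le; intro hlt; apply hbig; exists x, r; split; eauto.
Qed.

(* Continuity from above along B(x, 1/(k+1)) transfers a lower bound on
   ball measures to point masses. *)
Lemma point_mass_of_ball_lb (eps : R) :
  (forall x r, 0 < r -> ele (Fin eps) (mu (ball rho x r))) ->
  forall x, ele (Fin eps) (mu (fun y => y = x)).
Proof.
  intros hlb x.
  destruct (ball_measure_finite x (inv_succ 0) (inv_succ_pos 0)) as [T hT].
  rewrite (mu_ext mu _ (fun y => forall k, ball rho x (inv_succ k) y))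
    by (intro y; symmetry; apply singleton_as_balls).
  apply (measure_decreasing_ge M mu ht_sigma ht_measure _ T); auto.
  - intro k; apply ball_measurable.
  - intros k y; unfold ball; pose proof (inv_succ_decr k); lra.
  - intro k; apply hlb, inv_succ_pos.
Qed.

(* With point masses bounded below, every ball is finite, so X is exhausted
   by the finite sets of points at distance < N + 1 from x0. *)
Lemma countable_of_point_mass (x0 : X) (eps : R) :
  infinite_type X -> 0 < eps -> (forall x, ele (Fin eps) (mu (fun y => y = x))) ->
  countably_infinite X.
Proof.
  intros hinf he hpt.
  destruct (choice (fun z n => rho x0 z < INR n) (fun z => INR_unbounded (rho x0 z)))
    as [lvl hlvl].
  apply (countably_infinite_of_bounded_levels X lvl hinf); intro N.
  assert (hr : 0 < INR N + 1) by (pose proof (pos_INR N); lra).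
  destruct (ball_measure_finite x0 _ hr) as [b hb].
  destruct (nat_mul_unbounded b eps he) as [c hc].
  exists c; intros l hnd hl.
  assert (hle := points_mass_le M mu ht_sigma ht_measure _ b eps l singleton_measurable hpt
                   (ball_measurable x0 _) hb hnd).
  apply INR_le, Rlt_le, (Rmult_lt_reg_r eps); auto.
  apply (Rle_lt_trans _ b); auto; apply hle.
  intros z hz; unfold ball; specialize (hl z hz); apply le_INR in hl; specialize (hlvl z); lra.
Qed.

Lemma finite_total_excludes_point_mass (m delta : R) :
  mu (fun _ => True) = Fin m -> countably_infinite X -> 0 < delta ->
  ~ (forall x, ele (Fin delta) (mu (fun y => y = x))).
Proof.
  intros hm [f [finj _]] hd hpt.
  destruct (nat_mul_unbounded m delta hd) as [k hk].
  assert (h := points_mass_le M mu ht_sigma ht_measure _ m delta (map f (seq 0 k))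
                 singleton_measurable hpt (proj1 ht_sigma) hm
                 (Injective_map_NoDup finj (seq_NoDup k 0)) (fun _ _ => I)).
  rewrite length_map, length_seq in h; lra.
Qed.

End HomogeneousType.

Theorem lemma2p4 (X : Type) (rho : X -> X -> R)
  (M : (X -> Prop) -> Prop) (mu : (X -> Prop) -> ereal) :
  homogeneous_type rho M mu ->
  infinite_type X ->
  exactly_one
    (* (1) mu(X) < oo *)
    (exists m, mu (fun _ => True) = Fin m)
    (* (2) X countably infinite and point masses bounded below *)
    (countably_infinite X /\
     exists delta, 0 < delta /\ forall x, ele (Fin delta) (mu (fun y => y = x)))
    (* (3) inf over balls of mu(B) = 0 and sup = oo *)
    ((forall eps, 0 < eps -> exists x r, 0 < r /\ exists m,
        mu (ball rho x r) = Fin m /\ m < eps) /\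
     (forall K, exists x r, 0 < r /\ ~ ele (mu (ball rho x r)) (Fin K))).
Proof.
  intros H hinf. destruct (hinf nil) as [x0 _].
  split; [|split; [|split]].
  - destruct (classic (exists m, mu (fun _ => True) = Fin m)) as [hfin | hnfin];
      [left; exact hfin | right].
    assert (hlarge := balls_unbounded rho M mu H x0 (fun m e => hnfin (ex_intro _ m e))).
    destruct (classic (forall eps, 0 < eps -> exists x r, 0 < r /\ exists m,
                 mu (ball rho x r) = Fin m /\ m < eps)) as [hsmall | hnsmall];
      [right; split; auto | left].
    destruct (ball_lb_of_not_small rho M mu H hnsmall) as [eps [he hlb]].
    assert (hpt := point_mass_of_ball_lb rho M mu H eps hlb).
    split; [exact (countable_of_point_mass rho M mu H x0 eps hinf he hpt) | eauto].
  - intros [[m hm] [hcount [delta [hd hpt]]]].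
    exact (finite_total_excludes_point_mass rho M mu H m delta hm hcount hd hpt).
  - intros [[m hm] [_ hlarge]]. destruct (hlarge m) as [x [r [_ hbig]]].
    apply hbig; rewrite <- hm; exact (ball_le_total rho M mu H x r).
  - intros [[_ [delta [hd hpt]]] [hsmall _]].
    destruct (hsmall delta hd) as [x [r [hr [m [hm hlt]]]]].
    assert (h := ele_trans _ _ _ (hpt x) (point_le_ball rho M mu H x r hr)).
    rewrite hm in h; simpl in h; lra.
Qed.
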